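(* Let $F\in\mathbb{C}(X_1,\dots,X_n)$ be a rational function admitting a power series expansion at the origin $\sum_{k_1,\dots,k_n}a_{k_1,\dots,k_n}X_1^{k_1}\cdots X_n^{k_n}$ with non-negative coefficients $a_{k_1,\dots,k_n}\geq 0$. If $\sum_{k_1,\dots,k_n}a_{k_1,\dots,k_n}<\infty$, then there exists $\varepsilon>0$ such that this power series converges on the polydisk $\{(w_1,\dots,w_n)\in\mathbb{C}^n:\ |w_i|\leq 1+\varepsilon\text{ for all }1\leq i\leq n\}$. *)

From HB Require Import structures.
From mathcomp Require Import all_boot all_order all_algebra.
From mathcomp Require Import all_classical all_reals all_analysis.
From mathcomp Require Import complex.
Set Implicit Arguments. Unset Strict Implicit. Unset Printing Implicit Defensive.
Import Order.TTheory GRing.Theory Num.Theory.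
Local Open Scope ring_scope.

Definition midx (n : nat) := {ffun 'I_n -> nat}.

Definition mmax n (k : midx n) : nat := \max_(i < n) k i.

Definition box_midx n s (j : {ffun 'I_n -> 'I_s.+1}) : midx n :=
  [ffun i => nat_of_ord (j i)].

Definition is_poly (R : rcfType) n (p : midx n -> R[i]) : Prop :=
  exists d : nat, forall k : midx n, ~~ [forall i, (k i <= d)%N] -> p k = 0.

(* Coefficient of index k of the Cauchy product of (formal power series
   with coefficient functions) p and a:
   (p * a)_k = sum_{j <= k} p_j a_{k - j}. *)
Definition cauchy_coef (R : rcfType) n (p a : midx n -> R[i]) (k : midx n) : R[i] :=
  \sum_(j : {ffun 'I_n -> 'I_(mmax k).+1} | [forall i, (j i <= k i)%N])
     p (box_midx j) * a [ffun i => (k i - box_midx j i)%N].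

Definition monom (R : rcfType) n (w : 'I_n -> R[i]) (k : midx n) : R[i] :=
  \prod_(i < n) w i ^+ k i.

Definition cabs (R : rcfType) (z : R[i]) : R := complex.Re `|z|.

Definition midx0 n : midx n := [ffun _ => 0%N].

From HB Require Import structures.
From mathcomp Require Import all_boot all_order all_algebra.
From mathcomp Require Import all_classical all_reals all_analysis.
From mathcomp Require Import complex.
From mathcomp Require Import zify ring lra.
Set Implicit Arguments. Unset Strict Implicit. Unset Printing Implicit Defensive.
Import Order.TTheory GRing.Theory Num.Theory.
Import numFieldNormedType.Exports.
Local Open Scope ring_scope.
Local Open Scope classical_set_scope.

(* Let b_m be the sum of the a_k over the multi-indices k of total degree m.
   Grading Q * a = P by total degree shows that, beyond the degree of P, the
   real sequence (b_m) satisfies a linear recurrence whose length is the total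
   degree of Q; and b_m -> 0 since the a_k are summable.  A linear recurrent
   sequence s tending to 0 decays geometrically: each window of d consecutive
   terms is a fixed linear image of the first d windows, so
   |s_(m+k)| <= C W_m W_k for the window sums W, hence W halves after some
   fixed number of steps.  So sum_m b_m (1 + eps)^m < oo for a small eps > 0,
   and this series dominates sum_k |a_k w^k| on the polydisk of radius 1 + eps. *)

Section LinearRecurrence.
Variables (F : numFieldType) (d : nat) (c : 'I_d -> F).

Definition lin_rec (x : nat -> F) :=
  forall m, x (m + d)%N = \sum_(l < d) c l * x (m + l)%N.

Lemma lin_rec_eq x y : lin_rec x -> lin_rec y ->
  (forall k, (k < d)%N -> x k = y k) -> x =1 y.
Proof.
move=> rec_x rec_y xy; elim/ltn_ind => k IH.
have [/xy//|dk] := ltnP k d.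
rewrite -(subnK dk) rec_x rec_y; apply: eq_bigr => l _; rewrite IH //.
by have := ltn_ord l; lia.
Qed.

Variables (s : nat -> F) (s_rec : lin_rec s).

Let hankel : 'M[F]_d := \matrix_(i, j) s (i + j)%N.
Let window m : 'rV[F]_d := \row_j s (m + j)%N.

Lemma window_sub_hankel m : (window m <= hankel)%MS.
Proof.
elim/ltn_ind: m => m IH; have [md|dm] := ltnP m d.
  have -> : window m = row (Ordinal md) hankel by apply/rowP => j; rewrite !mxE.
  exact: row_sub.
have -> : window m = \sum_(l < d) c l *: window (m - d + l)%N.
  apply/rowP => j; rewrite !mxE summxE.
  have -> : (m + j = m - d + j + d)%N by lia.
  by rewrite s_rec; apply: eq_bigr => l _; rewrite !mxE addnAC.
apply: summx_sub => l _; apply/scalemx_sub/IH.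
by have := ltn_ord l; lia.
Qed.

(* The window at m is a combination of the first d windows; both sides below
   satisfy the recurrence in k, so they agree as soon as they agree on k < d. *)
Lemma lin_rec_shiftE m k :
  s (m + k)%N = \sum_(i < d) (window m *m pinvmx hankel) 0 i * s (i + k)%N.
Proof.
apply: (@lin_rec_eq (fun k => s (m + k)%N)
  (fun k => \sum_(i < d) (window m *m pinvmx hankel) 0 i * s (i + k)%N)) => [k'|k'|k' k'd] /=.
- by rewrite addnA s_rec; apply: eq_bigr => l _; rewrite addnA.
- under eq_bigr => i _ do rewrite addnA s_rec mulr_sumr.
  rewrite exchange_big; apply: eq_bigr => l _ /=.
  by rewrite mulr_sumr; apply: eq_bigr => i _; rewrite mulrCA addnA.
- have /rowP/(_ (Ordinal k'd)) := mulmxKpV (window_sub_hankel m).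
  by rewrite /= !mxE => <-; apply: eq_bigr => i _; rewrite /hankel !mxE.
Qed.

Definition window_norm m := \sum_(j < d) `|s (m + j)%N|.

Let pinv_norm := \sum_(j < d) \sum_(i < d) `|pinvmx hankel j i|.

Lemma window_norm_ge0 m : 0 <= window_norm m.
Proof. exact: sumr_ge0. Qed.

Lemma norm_lin_rec_shift_le m k :
  `|s (m + k)%N| <= window_norm m * pinv_norm * window_norm k.
Proof.
have coef_le i : `|(window m *m pinvmx hankel) 0 i| <= window_norm m * pinv_norm.
  rewrite mxE (le_trans (ler_norm_sum _ _ _)) // mulr_suml ler_sum // => j _.
  rewrite normrM mxE ler_wpM2l // /pinv_norm (bigD1 j) //= (bigD1 i) //=.
  by rewrite -addrA lerDl addr_ge0 ?sumr_ge0 // => *; rewrite sumr_ge0.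
rewrite lin_rec_shiftE (le_trans (ler_norm_sum _ _ _)) // mulr_sumr ler_sum // => i _.
by rewrite normrM addnC ler_wpM2r.
Qed.

Lemma window_norm_halving : s @ \oo --> 0 ->
  exists2 K, (0 < K)%N & forall m, window_norm (m + K) <= window_norm m / 2.
Proof.
have pinv_norm_ge0 : 0 <= pinv_norm by do 2!apply: sumr_ge0 => ? _.
pose A := pinv_norm * (d * d)%:R.
have A_ge0 : 0 <= A by rewrite mulr_ge0.
(* small enough that pinv_norm * d^2 * e <= 1/2 *)
pose e := (2 * (A + 1))^-1.
have e_gt0 : 0 < e by rewrite invr_gt0 mulr_gt0 // ltr_wpDl.
move=> /cvgr0_norm_le/(_ e e_gt0)[K _ small].
have tail_le j : (K <= j)%N -> window_norm j <= e *+ d.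
  move=> Kj; rewrite -[d in e *+ d]card_ord -sumr_const.
  by apply: ler_sum => i _; apply: small; rewrite /= (leq_trans Kj) ?leq_addr.
exists K.+1 => // m.
apply: (@le_trans _ _ (\sum_(j < d) window_norm m * pinv_norm * window_norm (K.+1 + j))).
  by apply: ler_sum => j _; rewrite -addnA norm_lin_rec_shift_le.
rewrite -mulr_sumr -mulrA ler_wpM2l ?window_norm_ge0 //.
apply: (@le_trans _ _ (pinv_norm * (e *+ d *+ d))).
  rewrite ler_wpM2l // -[d in _ *+ d]card_ord -sumr_const.
  by apply: ler_sum => j _; apply: tail_le; rewrite ltnW // ltnS leq_addr.
rewrite -mulrnA -[e *+ _]mulr_natl mulrA ler_pdivrMr ?mulr_gt0 ?ltr_wpDl //.
by rewrite mulKf ?pnatr_eq0 // lerDl.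
Qed.

End LinearRecurrence.

Lemma norm_le_window_norm (F : numFieldType) d (c : 'I_d -> F) s t :
  lin_rec c s -> `|s t| <= window_norm d s t.
Proof.
case: d c => [c s_rec|d c _]; last first.
  by rewrite /window_norm big_ord_recl addn0 lerDl sumr_ge0.
by rewrite -[t]addn0 s_rec big_ord0 normr0 sumr_ge0.
Qed.

Lemma expr1D_le (F : realFieldType) (x : F) k :
  0 <= x -> k%:R * x <= 4^-1 -> (1 + x) ^+ k <= 1 + 2 * k%:R * x.
Proof.
move=> x_ge0; elim: k => [|k IH] kx; first by rewrite expr0 mulr0 mul0r addr0.
have kx' : k%:R * x <= 4^-1 by apply: le_trans kx; rewrite ler_wpM2r // ler_nat.
rewrite exprS (le_trans (ler_wpM2l _ (IH kx'))) ?addr_ge0 //.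
by move: kx; rewrite -natr1; nra.
Qed.

Lemma contraction_sum_le (F : realFieldType) (V : nat -> F) K (r : F) :
  (forall t, 0 <= V t) -> 0 <= r < 1 -> (forall t, V (t + K)%N <= r * V t) ->
  forall T, \sum_(t < T) V t <= (1 - r)^-1 * \sum_(t < K) V t.
Proof.
move=> V_ge0 /andP[r_ge0 r_lt1] contract T.
pose S n := \sum_(t < n) V t.
have S_mono n : S n <= S (K + n)%N.
  by rewrite /S addnC big_split_ord lerDl sumr_ge0.
have S_KT : S (K + T)%N <= S K + r * S (K + T)%N.
  rewrite {1}/S big_split_ord lerD2l; apply: (@le_trans _ _ (r * S T)).
    by rewrite mulr_sumr; apply: ler_sum => t _; rewrite /= addnC.
  by rewrite ler_wpM2l ?S_mono.
rewrite ler_pdivlMl ?subr_gt0 // -/(S T) -/(S K).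
by move: (S_mono T) S_KT; nra.
Qed.

Lemma nneseries_lty_of_bounded (R : realType) (u : nat -> R) (B : R) :
  (forall t, 0 <= u t) -> (forall T, \sum_(t < T) u t <= B) ->
  (\sum_(t <oo) (u t)%:E < +oo)%E.
Proof.
move=> u_ge0 bounded; apply: (@le_lt_trans _ _ B%:E); last exact: ltry.
apply: lime_le; first by apply: is_cvg_nneseries => t _ _; rewrite lee_fin.
by apply: nearW => T; rewrite sumEFin lee_fin big_mkord.
Qed.

Lemma nneseries_lty_of_tail (R : realType) (u : nat -> R) N :
  (forall t, 0 <= u t) -> (\sum_(t <oo) (u (t + N)%N)%:E < +oo)%E ->
  (\sum_(t <oo) (u t)%:E < +oo)%E.
Proof.
move=> u_ge0; rewrite (@nneseries_addn _ (fun t => (u t)%:E)) => [tail|t]; last first.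
  by rewrite lee_fin.
rewrite (nneseries_split 0 N) => [|t _]; last by rewrite lee_fin.
by rewrite add0n sumEFin lte_add_pinfty ?ltry.
Qed.

Lemma halving_weighted_summable (R : realType) (W : nat -> R) K :
  (0 < K)%N -> (forall t, 0 <= W t) -> (forall t, W (t + K)%N <= W t / 2) ->
  exists2 eps : R, 0 < eps & (\sum_(t <oo) (W t * (1 + eps) ^+ t)%:E < +oo)%E.
Proof.
move=> K_gt0 W_ge0 halving.
pose eps : R := (4 * K%:R)^-1.
have eps_gt0 : 0 < eps by rewrite invr_gt0 mulr_gt0 ?ltr0n.
have Keps : K%:R * eps = 4^-1 by rewrite /eps invfM mulrCA mulfV ?mulr1 ?pnatr_eq0 -?lt0n.
have rhoK : (1 + eps) ^+ K <= 3 / 2.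
  apply: le_trans (expr1D_le (ltW eps_gt0) (_ : K%:R * eps <= 4^-1)) _.
    by rewrite Keps.
  by rewrite -mulrA Keps; lra.
have rho_ge0 t : 0 <= (1 + eps) ^+ t by rewrite exprn_ge0 // addr_ge0 // ltW.
pose V t := W t * (1 + eps) ^+ t.
have V_ge0 t : 0 <= V t by rewrite mulr_ge0.
have contract t : V (t + K)%N <= 3 / 4 * V t.
  rewrite /V exprD mulrA (le_trans (ler_wpM2l _ rhoK)) ?mulr_ge0 //.
  by move: (halving t) (rho_ge0 t); rewrite /V; nra.
exists eps => //; apply: (nneseries_lty_of_bounded V_ge0).
by apply: contraction_sum_le => //; lra.
Qed.

Lemma lin_rec_geometric_summable (R : realType) d (c : 'I_d -> R) (s : nat -> R) :
  lin_rec c s -> s @ \oo --> 0 ->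
  exists2 eps : R, 0 < eps & (\sum_(t <oo) (`|s t| * (1 + eps) ^+ t)%:E < +oo)%E.
Proof.
move=> s_rec /(window_norm_halving s_rec)[K K_gt0 halving].
have [eps eps_gt0 summable] :=
  halving_weighted_summable K_gt0 (window_norm_ge0 d s) halving.
exists eps => //; apply: le_lt_trans summable.
have rho_ge0 t : 0 <= (1 + eps) ^+ t by rewrite exprn_ge0 // addr_ge0 // ltW.
apply: lee_nneseries => [t _ _|t _]; rewrite lee_fin; first by rewrite mulr_ge0.
by rewrite ler_wpM2r // (norm_le_window_norm _ s_rec).
Qed.

Lemma eventually_lin_rec_geometric_summable (R : realType) d (c : 'I_d -> R)
    (b : nat -> R) N :
  (forall m, 0 <= b m) -> lin_rec c (fun t => b (t + N)%N) -> b @ \oo --> 0 ->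
  exists2 eps : R, 0 < eps & (\sum_(m <oo) (b m * (1 + eps) ^+ m)%:E < +oo)%E.
Proof.
move=> b_ge0 b_rec b_cvg0.
have [|eps eps_gt0 tail] := lin_rec_geometric_summable b_rec.
  by rewrite (cvg_shiftn N (fun m => b m)).
have rho_ge0 m : 0 <= (1 + eps) ^+ m by rewrite exprn_ge0 // addr_ge0 // ltW.
exists eps => //; apply: (@nneseries_lty_of_tail _ _ N) => [m|]; first by rewrite mulr_ge0.
under eq_eseriesr => t _ do rewrite exprD (mulrC (_ ^+ t)) mulrCA -(ger0_norm (b_ge0 _)) EFinM.
by rewrite nneseriesZl => [|t _]; rewrite ?lte_mul_pinfty ?ltry ?lee_fin ?mulr_ge0.
Qed.

Section MultiIndex.
Variable n : nat.
Implicit Types (k x y : midx n) (m : nat).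

Definition mdeg k : nat := \sum_(i < n) k i.

Definition mbox m : seq (midx n) :=
  [seq box_midx j | j <- enum {ffun 'I_n -> 'I_m.+1}].

Definition mle x k := [forall i, (x i <= k i)%N].
Definition madd x y : midx n := [ffun i => (x i + y i)%N].
Definition msub k x : midx n := [ffun i => (k i - x i)%N].

Definition degsum (V : nmodType) (f : midx n -> V) m : V :=
  \sum_(k <- mbox m | mdeg k == m) f k.

Lemma mbox_uniq m : uniq (mbox m).
Proof.
rewrite map_inj_uniq ?enum_uniq // => j1 j2 /ffunP j12.
by apply/ffunP => i; apply: val_inj; have := j12 i; rewrite !ffunE.
Qed.

Lemma mem_mbox m k : (k \in mbox m) = [forall i, (k i <= m)%N].
Proof.
apply/mapP/forallP => [[j _ ->] i|k_le]; first by rewrite ffunE -ltnS.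
exists [ffun i => inord (k i)]; first by rewrite mem_enum.
by apply/ffunP => i; rewrite !ffunE inordK ?ltnS.
Qed.

Lemma mbox_subset m M k : (m <= M)%N -> k \in mbox m -> k \in mbox M.
Proof.
by move=> mM; rewrite !mem_mbox => /forallP k_le; apply/forallP => i; rewrite (leq_trans _ mM).
Qed.

Lemma leq_mdeg k i : (k i <= mdeg k)%N.
Proof. by rewrite /mdeg (bigD1 i) //= leq_addr. Qed.

Lemma mmax_le_mdeg k : (mmax k <= mdeg k)%N.
Proof. by apply/bigmax_leqP => i _; apply: leq_mdeg. Qed.

Lemma mem_mbox_mdeg m k : (mdeg k <= m)%N -> k \in mbox m.
Proof. by move=> km; rewrite mem_mbox; apply/forallP => i; rewrite (leq_trans (leq_mdeg k i)). Qed.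

Lemma mdeg_madd x y : mdeg (madd x y) = (mdeg x + mdeg y)%N.
Proof. by rewrite /mdeg -big_split; apply: eq_bigr => i _; rewrite ffunE. Qed.

Lemma mdeg_msub k x : mle x k -> mdeg (msub k x) = (mdeg k - mdeg x)%N.
Proof.
move/forallP => xk; rewrite /mdeg -sumnB => [|i _]; last exact: xk.
by apply: eq_bigr => i _; rewrite ffunE.
Qed.

Lemma mle_mdeg x k : mle x k -> (mdeg x <= mdeg k)%N.
Proof. by move/forallP => xk; apply: leq_sum => i _; apply: xk. Qed.

Lemma maddK x : cancel (madd x) (msub^~ x).
Proof. by move=> y; apply/ffunP => i; rewrite !ffunE addKn. Qed.

Lemma msubK x k : mle x k -> madd x (msub k x) = k.
Proof. by move/forallP => xk; apply/ffunP => i; rewrite !ffunE subnKC. Qed.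

Lemma mle_madd x y : mle x (madd x y).
Proof. by apply/forallP => i; rewrite ffunE leq_addr. Qed.

Lemma big_mbox_widen (V : nmodType) m M (P : pred (midx n)) (f : midx n -> V) :
  (m <= M)%N -> (forall k, P k -> k \in mbox m) ->
  \sum_(k <- mbox m | P k) f k = \sum_(k <- mbox M | P k) f k.
Proof.
move=> mM P_box; rewrite -[LHS]big_filter -[RHS]big_filter; apply/perm_big/uniq_perm => [||k].
- by rewrite filter_uniq ?mbox_uniq.
- by rewrite filter_uniq ?mbox_uniq.
rewrite !mem_filter; case Pk: (P k) => //=.
by rewrite (P_box k Pk) (mbox_subset mM (P_box k Pk)).
Qed.

Lemma degsum_widen (V : nmodType) (f : midx n -> V) j m : (j <= m)%N ->
  degsum f j = \sum_(k <- mbox m | mdeg k == j) f k.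
Proof. by move=> jm; apply: big_mbox_widen => // k /eqP kj; rewrite mem_mbox_mdeg ?kj. Qed.

Lemma cauchy_coefE (R : rcfType) (Q a : midx n -> R[i]) k M : (mmax k <= M)%N ->
  cauchy_coef Q a k = \sum_(x <- mbox M | mle x k) Q x * a (msub k x).
Proof.
move=> kM; rewrite -(big_mbox_widen _ kM) => [|x /forallP xk]; last first.
  by rewrite mem_mbox; apply/forallP => i; rewrite (leq_trans (xk i)) ?leq_bigmax.
rewrite /cauchy_coef /mbox big_map big_enum_cond /=.
by apply: eq_big => [j|j _] //; apply: eq_forallb => i; rewrite ffunE.
Qed.

Lemma degsum_msub (V : nmodType) (g : midx n -> V) m x : (mdeg x <= m)%N ->
  \sum_(k <- mbox m | (mdeg k == m) && mle x k) g (msub k x) = degsum g (m - mdeg x)%N.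
Proof.
move=> xm; rewrite (degsum_widen _ (leq_subr _ _)).
transitivity (\sum_(k <- map (madd x) [seq y <- mbox m | mdeg y == m - mdeg x]%N)
                g (msub k x)); last first.
  by rewrite big_map big_filter; apply: eq_bigr => y _; rewrite maddK.
rewrite -big_filter; apply/perm_big/uniq_perm => [||k].
- by rewrite filter_uniq ?mbox_uniq.
- by rewrite map_inj_uniq ?filter_uniq ?mbox_uniq //; apply: can_inj (maddK x).
rewrite mem_filter; apply/idP/mapP => [/andP[/andP[/eqP km xk] _]|[y]].
  exists (msub k x); last by rewrite msubK.
  rewrite mem_filter mdeg_msub // km eqxx mem_mbox_mdeg //.
  by rewrite mdeg_msub // km leq_subr.
rewrite mem_filter => /andP[/eqP ym _] ->.
by rewrite mdeg_madd ym subnKC // eqxx mle_madd mem_mbox_mdeg // mdeg_madd ym subnKC.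
Qed.

Lemma degsum_cauchy (R : rcfType) (Q a : midx n -> R[i]) m :
  degsum (cauchy_coef Q a) m = \sum_(j < m.+1) degsum Q j * degsum a (m - j)%N.
Proof.
transitivity (\sum_(x <- mbox m | (mdeg x <= m)%N) Q x * degsum a (m - mdeg x)%N).
  rewrite {1}/degsum (eq_bigr (fun k => \sum_(x <- mbox m | mle x k) Q x * a (msub k x))).
    rewrite (exchange_big_dep (fun x => mdeg x <= m)%N) => [|k x /eqP <-]; last exact: mle_mdeg.
    by apply: eq_bigr => x xm; rewrite -degsum_msub // mulr_sumr.
  by move=> k /eqP km; apply: cauchy_coefE; rewrite -km mmax_le_mdeg.
rewrite (partition_big (fun x => inord (mdeg x) : 'I_m.+1) xpredT) //.
apply: eq_bigr => j _; rewrite (degsum_widen _ (ltnSE (ltn_ord j))) mulr_suml.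
rewrite (eq_bigl (fun x => mdeg x == j)) => [|x]; first by apply: eq_bigr => x /eqP ->.
have [xm|mx] := leqP (mdeg x) m; last by apply/esym/eqP => xj; move: (ltn_ord j); lia.
by rewrite -(inj_eq val_inj) /= inordK.
Qed.

Lemma esum_degsum (R : realType) (f : midx n -> R) : (forall k, 0 <= f k) ->
  \esum_(k in [set: midx n]) (f k)%:E = (\sum_(m <oo) (degsum f m)%:E)%E.
Proof.
move=> f_ge0; pose level m := [set` [seq k <- mbox m | mdeg k == m]].
have levelE m k : level m k <-> mdeg k = m.
  by rewrite /level /= mem_filter andb_idr => [|/eqP <-]; [split => /eqP|rewrite mem_mbox_mdeg].
have -> : [set: midx n] = \bigcup_m level m.
  by apply/seteqP; split => k // _; exists (mdeg k) => //; apply/levelE.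
rewrite nneseries_sum_bigcup => [|i j _ _ [k [/levelE <- /levelE <-]]|k] //; last first.
  by rewrite lee_fin.
apply: eq_eseriesr => m _; rewrite esum_fset => [||k _]; last by rewrite lee_fin.
  by rewrite -fsbig_seq ?filter_uniq ?mbox_uniq // big_filter sumEFin.
exact: finite_seq.
Qed.

Lemma degsum0 (V : nmodType) (f : midx n -> V) : degsum f 0 = f (midx0 n).
Proof.
have mdeg0 : mdeg (midx0 n) = 0%N by rewrite /mdeg big1 // => i _; rewrite ffunE.
rewrite /degsum (big_rem (midx0 n)) ?mem_mbox_mdeg ?mdeg0 ?eqxx //=.
rewrite big1_seq ?addr0 // => k /andP[/eqP k0].
have -> : k = midx0 n.
  by apply/ffunP => i; rewrite ffunE; apply/eqP; rewrite -leqn0 -k0 leq_mdeg.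
by rewrite mem_rem_uniqF ?mbox_uniq.
Qed.

Lemma degsum_eq0 (V : nmodType) (f : midx n -> V) d j :
  (forall k, ~~ [forall i, (k i <= d)%N] -> f k = 0) -> (n * d < j)%N -> degsum f j = 0.
Proof.
move=> f_supp dj; rewrite /degsum big1 // => k /eqP kj; apply/f_supp/forallP => k_le.
have : (mdeg k <= \sum_(i < n) d)%N by apply: leq_sum => i _; apply: k_le.
by rewrite sum_nat_const card_ord kj leqNgt dj.
Qed.

Lemma degsum_mulr_mdeg (S : pzSemiRingType) (f : midx n -> S) r m :
  degsum (fun k => f k * r ^+ mdeg k) m = degsum f m * r ^+ m.
Proof. by rewrite /degsum mulr_suml; apply: eq_bigr => k /eqP ->. Qed.

End MultiIndex.

Local Open Scope complex_scope.

Section ComplexModulus.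
Variable R : rcfType.
Implicit Types z : R[i].

Lemma cabsE z : `|z| = (cabs z)%:C.
Proof. by rewrite /cabs RRe_real // normr_real. Qed.

Lemma cabs_ge0 z : 0 <= cabs z.
Proof. by rewrite -ler0c -cabsE. Qed.

Lemma cabsM z1 z2 : cabs (z1 * z2) = cabs z1 * cabs z2.
Proof. by apply: (@complexI R); rewrite rmorphM -!cabsE normrM. Qed.

Lemma ge0_cabsE z : 0 <= z -> z = (cabs z)%:C.
Proof. by move=> z_ge0; rewrite -cabsE ger0_norm. Qed.

Lemma cabs_monom_le n (w : 'I_n -> R[i]) k r :
  (forall i, cabs (w i) <= r) -> cabs (monom w k) <= r ^+ mdeg k.
Proof.
move=> w_le; rewrite -lecR -cabsE rmorphXn /monom normr_prod /mdeg -prodrXr.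
apply: ler_prod => i _; rewrite normr_ge0 normrX lerXn2r ?nnegrE ?normr_ge0 //.
  by rewrite ler0c (le_trans (cabs_ge0 (w i))).
by rewrite cabsE lecR.
Qed.

Lemma Re_sum_mulC I (r : seq I) (z : I -> R[i]) (x : I -> R) :
  complex.Re (\sum_(i <- r) z i * (x i)%:C) = \sum_(i <- r) complex.Re (z i) * x i.
Proof.
rewrite (raddf_sum (@complex.Re R : Rcomplex R -> R)); apply: eq_bigr => i _.
by case: (z i) => u v /=; rewrite mulr0 subr0.
Qed.

(* Normalising by [q 0] and taking real parts turns a complex recurrence
   satisfied by a real sequence into a real one. *)
Lemma lin_rec_of_convolution (q : nat -> R[i]) (b : nat -> R) D N :
  q 0%N != 0 -> (forall j, (D < j)%N -> q j = 0) ->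
  (forall m, (N <= m)%N -> \sum_(j < m.+1) q j * (b (m - j)%N)%:C = 0) ->
  exists c : 'I_D -> R, lin_rec c (fun t => b (t + N)%N).
Proof.
move=> q0 q_supp conv; exists (fun l => - complex.Re (q (D - l)%N / q 0%N)) => t /=.
pose M := (t + D + N)%N; pose F j := q j * (b (M - j)%N)%:C.
have DM : (D <= M)%N by rewrite /M; lia.
have trunc : \sum_(j < M.+1) F j = \sum_(j < D.+1) F j.
  rewrite (big_ord_widen _ F (DM : D.+1 <= M.+1)%N).
  rewrite [RHS]big_mkcond; apply: eq_bigr => j _; case: ltnP => // Dj.
  by rewrite /F q_supp ?mul0r.
have := congr1 (fun z => complex.Re ((q 0%N)^-1 * z)) (conv M (leq_addl _ _)).
rewrite trunc mulr_sumr big_ord_recl /=.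
under eq_bigr do rewrite /F mulrA.
rewrite /F mulrA mulVf // mul1r raddfD /= Re_sum_mulC.
rewrite mulr0 (reindex_inj rev_ord_inj) subn0 => /eqP; rewrite addr_eq0 => /eqP ->.
rewrite -sumrN; apply: eq_bigr => l _; rewrite -mulNr [_^-1 * _]mulrC.
have l_lt := ltn_ord l; have -> : bump 0 (rev_ord l) = (D - l)%N by rewrite /bump /=; lia.
by congr (_ * b _); rewrite /M; lia.
Qed.

End ComplexModulus.

Theorem lemmaB3 (R : realType) (n : nat) (P Q a : midx n -> R[i]) :
  is_poly P -> is_poly Q -> Q (midx0 n) != 0 ->
  (forall k, cauchy_coef Q a k = P k) ->
  (forall k, 0 <= a k) ->
  (\esum_(k in [set: midx n]) ((cabs (a k))%:E) < +oo)%E ->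
  exists2 eps : R, 0 < eps &
    forall w : 'I_n -> R[i], (forall i, cabs (w i) <= 1 + eps) ->
      (\esum_(k in [set: midx n]) ((cabs (a k * monom w k))%:E) < +oo)%E.
Proof.
move=> [dP P_poly] [dQ Q_poly] Q0 QaP a_ge0 a_sum.
pose b := degsum (fun k => cabs (a k)).
have b_ge0 m : 0 <= b m by apply: sumr_ge0 => k _; apply: cabs_ge0.
have b_cvg0 : b @ \oo --> 0.
  apply/cvg_series_cvg_0/nnseries_is_cvg => //.
  by rewrite -esum_degsum // => k; apply: cabs_ge0.
have [c b_rec] : exists c : 'I_(n * dQ) -> R, lin_rec c (fun t => b (t + (n * dP).+1)%N).
  apply: (lin_rec_of_convolution (q := degsum Q)) => [|j|m Pm].
  - by rewrite degsum0.
  - exact: degsum_eq0 Q_poly.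
  have degsum_aE j : degsum a j = (b j)%:C.
    by rewrite /b /degsum rmorph_sum; apply: eq_bigr => k _; exact: ge0_cabsE.
  under eq_bigr do rewrite -degsum_aE.
  rewrite -degsum_cauchy -(degsum_eq0 P_poly Pm).
  by apply: eq_bigr => k _; apply: QaP.
have [eps eps_gt0 summable] := eventually_lin_rec_geometric_summable b_ge0 b_rec b_cvg0.
exists eps => // w w_le; apply: le_lt_trans summable.
under eq_eseriesr do rewrite /b -degsum_mulr_mdeg.
rewrite -esum_degsum => [|k]; last by rewrite mulr_ge0 ?cabs_ge0 ?exprn_ge0 ?addr_ge0 ?ltW.
by apply: le_esum => k _; rewrite lee_fin cabsM ler_wpM2l ?cabs_ge0 ?cabs_monom_le.
Qed.
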